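(* Consider a cellular network with $n$ base stations $\mathcal{N}=\{1,\dots,n\}$, base station $i$ serving a nonempty set $\mathcal{J}_i$ of users (pairwise disjoint), channel gains $g_{kj}>0$, noise power $\sigma^2>0$, and $$f_i(\mathbf{x};\mathbf{r},\mathbf{p})=\sum_{j\in\mathcal{J}_i}\frac{r_{ij}}{\log\Big(1+\frac{p_i g_{ij}}{\sum_{k\ne i} p_k g_{kj} x_k+\sigma^2}\Big)}.$$ Let $\mathbf{d}_{\min}>\mathbf{0}$ and consider Problem P0: $$\min_{\mathbf{p}>\mathbf{0},\ \mathbf{r}>\mathbf{0},\ \mathbf{0}<\mathbf{x}\le\mathbf{1}} \mathbf{x}^T\mathbf{p}\quad\text{s.t.}\quad \mathbf{x}=\mathbf{f}(\mathbf{x};\mathbf{r},\mathbf{p}),\quad \mathbf{r}\ge\mathbf{d}_{\min}.$$ Then the optimal rate vector of Problem P0 satisfies $\mathbf{r}^\star=\mathbf{d}_{\min}$.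
   Context: Vector inequalities are componentwise; $\log$ is natural logarithm. *)

From HB Require Import structures.
From mathcomp Require Import all_boot all_order all_algebra.
From mathcomp Require Import all_classical all_reals all_analysis.
Set Implicit Arguments. Unset Strict Implicit. Unset Printing Implicit Defensive.
Import Order.TTheory GRing.Theory Num.Theory.
Local Open Scope ring_scope.

(* Base stations are 'I_n; users form a finite type U; [a j] is the base
   station serving user j, so J_i = [set j | a j == i] (pairwise disjoint
   by construction).  Rates r_{ij} (j in J_i) are stored as [r j]. *)

Definition loadf (R : realType) (n : nat) (U : finType) (a : U -> 'I_n)
  (g : 'I_n -> U -> R) (sigma2 : R) (x : 'I_n -> R) (r : U -> R) (p : 'I_n -> R) (i : 'I_n) : R :=
  \sum_(j : U | a j == i)
     r j / ln (1 + p i * g i j /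
                   (\sum_(k < n | k != i) p k * g k j * x k + sigma2)).

Definition P0_feasible (R : realType) (n : nat) (U : finType) (a : U -> 'I_n)
  (g : 'I_n -> U -> R) (sigma2 : R) (dmin : U -> R) (x : 'I_n -> R) (r : U -> R) (p : 'I_n -> R) : Prop :=
  (forall i, 0 < p i) /\ (forall j, 0 < r j) /\
  (forall i, 0 < x i <= 1) /\
  (forall i, x i = loadf a g sigma2 x r p i) /\
  (forall j, dmin j <= r j).

Definition P0_obj (R : realType) (n : nat) (x p : 'I_n -> R) : R :=
  \sum_(i < n) x i * p i.

Definition P0_optimal (R : realType) (n : nat) (U : finType) (a : U -> 'I_n)
  (g : 'I_n -> U -> R) (sigma2 : R) (dmin : U -> R) (x : 'I_n -> R) (r : U -> R) (p : 'I_n -> R) : Prop :=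
  P0_feasible a g sigma2 dmin x r p /\
  forall x' r' p', P0_feasible a g sigma2 dmin x' r' p' ->
    P0_obj x p <= P0_obj x' p'.

From HB Require Import structures.
From mathcomp Require Import all_boot all_order all_algebra.
From mathcomp Require Import all_classical all_reals all_analysis.
Import Order.TTheory GRing.Theory Num.Theory.
Set Implicit Arguments. Unset Strict Implicit.
Local Open Scope ring_scope.

(* Suppose (x, r, p) is optimal but r_{j0} > dmin_{j0} for some user j0 of
   base station i0.  Each f_i is increasing in the loads x and in the rates r,
   so with the rates lowered to dmin we get f(x; dmin, p) <= x.  By Tarski's
   fixed point argument the monotone map f(.; dmin, p) then has a fixed point
   x* <= x, and x*_{i0} = f_{i0}(x*; dmin, p) <= f_{i0}(x; dmin, p)
   < f_{i0}(x; r, p) = x_{i0}.  Hence (x*, dmin, p) is feasible with a strictly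
   smaller power x*^T p, contradicting optimality. *)

Section FixpointBelow.
Variables (R : realType) (I : Type) (F : (I -> R) -> I -> R) (x : I -> R).
Hypotheses (x_ge0 : forall i, 0 <= x i)
  (F_ge0 : forall y, (forall i, 0 <= y i) -> forall i, 0 <= F y i)
  (F_mono : forall y z, (forall i, 0 <= y i) -> (forall i, y i <= z i) ->
     forall i, F y i <= F z i)
  (Fx_le : forall i, F x i <= x i).

(* The fixed point is the coordinatewise infimum of the nonnegative
   sub-fixed points of F lying below x. *)
Lemma fixpoint_below :
  exists2 y, (forall i, 0 <= y i <= x i) & forall i, F y i = y i.
Proof.
pose S y := (forall i, 0 <= y i <= x i) /\ (forall i, F y i <= y i).
have Sx : S x by split=> // i; rewrite lexx x_ge0.
pose ys i := inf [set y i | y in S].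
have ys_le y : S y -> forall i, ys i <= y i.
  move=> Sy i; apply: ge_inf; last by exists y.
  by exists 0 => _ [z [Sz _] <-]; case/andP: (Sz i).
have ys_ge0 i : 0 <= ys i.
  apply: lb_le_inf; first by exists (x i), x.
  by move=> _ [y [Sy _] <-]; case/andP: (Sy i).
have Fys_le i : F ys i <= ys i.
  apply: lb_le_inf; first by exists (x i), x.
  move=> _ [y Sy <-]; apply: le_trans (proj2 Sy i).
  exact: (F_mono ys_ge0 (ys_le y Sy) i).
have S_Fys : S (F ys).
  split=> [i|]; last exact: F_mono (F_ge0 ys_ge0) Fys_le.
  by rewrite F_ge0 // (le_trans (Fys_le i) (ys_le x Sx i)).
exists ys => [i|i]; first by rewrite ys_ge0 ys_le.
by apply/eqP; rewrite eq_le Fys_le ys_le.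
Qed.

End FixpointBelow.

Section Load.
Variables (R : realType) (n : nat) (U : finType) (a : U -> 'I_n)
  (g : 'I_n -> U -> R) (sigma2 : R) (p : 'I_n -> R).
Hypotheses (g_gt0 : forall k j, 0 < g k j) (sigma2_gt0 : 0 < sigma2)
  (p_gt0 : forall i, 0 < p i).

Definition interference (y : 'I_n -> R) i j :=
  \sum_(k < n | k != i) p k * g k j * y k + sigma2.

Definition spectral_eff (y : 'I_n -> R) i j :=
  ln (1 + p i * g i j / interference y i j).

Lemma loadfE y r i :
  loadf a g sigma2 y r p i = \sum_(j | a j == i) r j / spectral_eff y i j.
Proof. by []. Qed.

Lemma interference_gt0 y i j : (forall k, 0 <= y k) -> 0 < interference y i j.
Proof.
move=> y_ge0; apply: ltr_wpDl => //; apply: sumr_ge0 => k _.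
by rewrite !mulr_ge0 // ltW.
Qed.

Lemma interference_le y z i j : (forall k, y k <= z k) ->
  interference y i j <= interference z i j.
Proof.
move=> yz; rewrite lerD2r; apply: ler_sum => k _.
by rewrite ler_wpM2l // mulr_ge0 // ltW.
Qed.

Lemma sinr_gt0 y i j : (forall k, 0 <= y k) ->
  0 < p i * g i j / interference y i j.
Proof. by move=> y_ge0; rewrite divr_gt0 ?mulr_gt0 ?interference_gt0. Qed.

Lemma spectral_eff_gt0 y i j : (forall k, 0 <= y k) -> 0 < spectral_eff y i j.
Proof. by move=> y_ge0; rewrite ln_gt0 // ltrDl sinr_gt0. Qed.

Lemma spectral_eff_antitone y z i j : (forall k, 0 <= y k) ->
  (forall k, y k <= z k) -> spectral_eff z i j <= spectral_eff y i j.
Proof.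
move=> y_ge0 yz; have z_ge0 k : 0 <= z k := le_trans (y_ge0 k) (yz k).
rewrite ler_ln ?posrE ?addr_gt0 ?sinr_gt0 //.
rewrite lerD2l ler_wpM2l //; first by rewrite mulr_ge0 // ltW.
by rewrite lef_pV2 ?posrE ?interference_gt0 ?interference_le.
Qed.

Lemma loadf_ge0 y r i : (forall j, 0 <= r j) -> (forall k, 0 <= y k) ->
  0 <= loadf a g sigma2 y r p i.
Proof.
move=> r_ge0 y_ge0; apply: sumr_ge0 => j _.
by rewrite divr_ge0 // ltW ?spectral_eff_gt0.
Qed.

Lemma loadf_gt0 y r i : (exists j, a j = i) -> (forall j, 0 < r j) ->
  (forall k, 0 <= y k) -> 0 < loadf a g sigma2 y r p i.
Proof.
move=> [j0 <-] r_gt0 y_ge0; rewrite loadfE (bigD1 j0) //=.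
rewrite ltr_pwDl ?divr_gt0 ?spectral_eff_gt0 //.
by apply: sumr_ge0 => j _; rewrite divr_ge0 // ltW ?spectral_eff_gt0.
Qed.

Lemma loadf_mono y z r i : (forall j, 0 <= r j) -> (forall k, 0 <= y k) ->
  (forall k, y k <= z k) ->
  loadf a g sigma2 y r p i <= loadf a g sigma2 z r p i.
Proof.
move=> r_ge0 y_ge0 yz; have z_ge0 k : 0 <= z k := le_trans (y_ge0 k) (yz k).
rewrite !loadfE; apply: ler_sum => j _; rewrite ler_wpM2l //.
by rewrite lef_pV2 ?posrE ?spectral_eff_gt0 ?spectral_eff_antitone.
Qed.

Lemma loadf_le_rate y r r' i : (forall k, 0 <= y k) -> (forall j, r j <= r' j) ->
  loadf a g sigma2 y r p i <= loadf a g sigma2 y r' p i.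
Proof.
move=> y_ge0 rr'; apply: ler_sum => j _.
by rewrite ler_wpM2r // ltW // invr_gt0 spectral_eff_gt0.
Qed.

Lemma loadf_lt_rate y r r' j0 : (forall k, 0 <= y k) ->
  (forall j, r j <= r' j) -> r j0 < r' j0 ->
  loadf a g sigma2 y r p (a j0) < loadf a g sigma2 y r' p (a j0).
Proof.
move=> y_ge0 rr' lt_j0; rewrite !loadfE (bigD1 j0) //= [ltRHS](bigD1 j0) //=.
rewrite ltr_leD ?ltr_pM2r ?invr_gt0 ?spectral_eff_gt0 //.
by apply: ler_sum => j _; rewrite ler_wpM2r // ltW // invr_gt0 spectral_eff_gt0.
Qed.

End Load.

Lemma P0_obj_lt (R : realType) (n : nat) (x y p : 'I_n -> R) (i0 : 'I_n) :
  (forall i, 0 < p i) -> (forall i, y i <= x i) -> y i0 < x i0 ->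
  P0_obj y p < P0_obj x p.
Proof.
move=> p_gt0 yx lt_i0; rewrite /P0_obj (bigD1 i0) // [ltRHS](bigD1 i0) //=.
rewrite ltr_leD ?ltr_pM2r //.
by apply: ler_sum => i _; rewrite ler_wpM2r // ltW.
Qed.

Theorem lemma7 (R : realType) (n : nat) (U : finType) (a : U -> 'I_n)
  (g : 'I_n -> U -> R) (sigma2 : R) (dmin : U -> R)
  (Hnonempty : forall i : 'I_n, exists j : U, a j = i)
  (Hg : forall k j, 0 < g k j) (Hsigma : 0 < sigma2)
  (Hdmin : forall j, 0 < dmin j)
  (x : 'I_n -> R) (r : U -> R) (p : 'I_n -> R) :
  P0_optimal a g sigma2 dmin x r p -> r = dmin.
Proof.
move=> [[p_gt0 [r_gt0 [x_in [x_fix dmin_le]]]] x_opt].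
apply/funext => j0; apply/eqP; rewrite eq_le dmin_le andbT leNgt.
apply/negP => lt_j0.
have x_ge0 k : 0 <= x k by case/andP: (x_in k) => /ltW.
have dmin_ge0 j : 0 <= dmin j by exact: ltW.
pose F y := loadf a g sigma2 y dmin p.
have Fx_le i : F x i <= x i by rewrite [leRHS]x_fix loadf_le_rate.
have [xs xs_in xs_fix] : exists2 xs, (forall i, 0 <= xs i <= x i) &
    forall i, F xs i = xs i.
  apply: fixpoint_below => // [y y_ge0 i|y z y_ge0 yz i].
  - exact: loadf_ge0.
  - exact: loadf_mono.
have xs_ge0 k : 0 <= xs k by case/andP: (xs_in k).
have xs_le k : xs k <= x k by case/andP: (xs_in k).
have xs_feas : P0_feasible a g sigma2 dmin xs dmin p.
  split=> //; split=> //; split=> [i|]; last by split=> // i; exact/esym/xs_fix.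
  have xs_gt0 : 0 < xs i by rewrite -xs_fix; apply: loadf_gt0.
  by rewrite xs_gt0 (le_trans (xs_le i)) //; case/andP: (x_in i).
have lt_i0 : xs (a j0) < x (a j0).
  rewrite -xs_fix [ltRHS]x_fix (@le_lt_trans _ _ (F x (a j0))) //.
    exact: loadf_mono.
  exact: loadf_lt_rate.
by move: (x_opt _ _ _ xs_feas); rewrite leNgt (P0_obj_lt p_gt0 xs_le lt_i0).
Qed.
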